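(* Let $\epsilon>0$ and consider the algorithm with exact searches: given $\theta_{k-1}\in\Theta\cap\mathbb{V}$, let $\tau_{k-1}$ be a maximizer of $\tau\mapsto DL(\theta_{k-1},V_\tau)$ over $\tau\ge0$, and $\theta_k:=\operatorname{argsup}_{\theta\in\Theta\cap\mathbb{V}_{D(\theta_{k-1})\cup\{\tau_{k-1}\}}}L(\theta)$. Let $R:=L(\theta_{k-1})$ (assumed finite), let $s_R\ge 0$ and $m_R<\beta$ be constants such that every $\varphi\in\Theta$ with $L(\varphi)\ge R$ satisfies $|\varphi(0)|\le s_R$ and $\sup_x\varphi'(x+)\le m_R$, and let $\gamma:=\int_0^\infty(x^2+x_n^2)e^{s_R+m_Rx}M(dx)$. If $\sup_\tau DL(\theta_{k-1},V_\tau)\ge\epsilon$, then \[L(\theta_k)-L(\theta_{k-1})\ge\frac{\epsilon^2}{2\gamma}.\]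
   Context: Let $f$ be a probability density on $\mathbb{R}_{\ge0}$ satisfying the standing assumptions: (A1) $f$ is continuous and $f(x)>0$ for all $x>0$; (A2) there is $\beta\in\mathbb{R}$ such that for every $\lambda\in\mathbb{R}$, $\int_0^\infty e^{\lambda x}f(x)\,dx<\infty$ if and only if $\lambda<\beta$, and $\lim_{\lambda\to\beta^-}\int_0^\infty e^{\lambda x}f(x)\,dx=\infty$; (A3) for every $\lambda\in\mathbb{R}$, $\int_0^\infty e^{\lambda x}f(x)dx<\infty$ implies $\int_0^\infty x^2e^{\lambda x}f(x)dx<\infty$. Let $M$ be the measure on $\mathbb{R}_{\ge0}$ with density $f$. Fix data $x_1\le\dots\le x_n$ in $\mathbb{R}_{\ge0}$ with empirical distribution $\hat P=\frac1n\sum_{i=1}^n\delta_{x_i}$. $\Theta$ is the set of convex non-decreasing functions $\theta:\mathbb{R}_{\ge0}\to\mathbb{R}$. For $\theta\in\Theta$, $L(\theta):=\int\theta\,d\hat P-\int e^{\theta}\,dM+1\in[-\infty,\infty)$. For $\theta\in\Theta$ and a function $v$, $DL(\theta,v):=\lim_{t\to0^+}\frac{L(\theta+tv)-L(\theta)}{t}$. $\mathbb{V}$ is the set of continuous piecewise linear functions $v:\mathbb{R}_{\ge0}\to\mathbb{R}$ with finitely many breakpoints; $D(v)=\{\tau\ge0: v'(\tau-)\neq v'(\tau+)\}$ is its set of breakpoints; for finite $S\subset\mathbb{R}_{\ge0}$, $\mathbb{V}_S=\{v\in\mathbb{V}:D(v)\subseteq S\}$. For $\tau\ge0$, $V_\tau(x):=(x-\tau)^+$.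 *)

From HB Require Import structures.
From mathcomp Require Import all_boot all_order all_algebra.
From mathcomp Require Import all_classical all_reals all_analysis.
Set Implicit Arguments. Unset Strict Implicit. Unset Printing Implicit Defensive.
Import Order.TTheory GRing.Theory Num.Theory.
Import numFieldNormedType.Exports.
Local Open Scope classical_set_scope.
Local Open Scope ring_scope.

Section Defs.
Variable R : realType.

(* integral w.r.t. M(dx) = f(x) dx on R_{>=0} (extended-real valued) *)
Definition Mint (f g : R -> R) : \bar R :=
  (\int[lebesgue_measure]_(y in `[0%R, +oo[%classic) (g y * f y)%:E)%E.

(* integral w.r.t. the empirical distribution of x_0, ..., x_{n-1} *)
Definition Pint (n : nat) (x : nat -> R) (g : R -> R) : R :=
  n%:R^-1 * \sum_(i < n) g (x i).

Definition Lobj (f : R -> R) (n : nat) (x : nat -> R) (th : R -> R) : \bar R :=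
  ((Pint n x th)%:E - Mint f (fun y => expR (th y)) + 1)%E.

Definition DL (f : R -> R) (n : nat) (x : nat -> R) (th v : R -> R) : \bar R :=
  lim ((fun t : R => ((Lobj f n x (fun y => (th y + t * v y)%R) - Lobj f n x th)
                       * (t^-1)%:E)%E) @ 0^'+).

Definition inTheta (th : R -> R) : Prop :=
  (forall a b t, 0 <= a -> 0 <= b -> 0 <= t <= 1 ->
     th (t * a + (1 - t) * b) <= t * th a + (1 - t) * th b) /\
  (forall a b, 0 <= a -> a <= b -> th a <= th b).

Definition rderiv (v : R -> R) (tau : R) : R :=
  lim ((fun h : R => (v (tau + h) - v tau) / h) @ 0^'+).
Definition lderiv (v : R -> R) (tau : R) : R :=
  lim ((fun h : R => (v (tau + h) - v tau) / h) @ 0^'-).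

(* V : continuous piecewise linear functions on R_{>=0} with finitely many
   breakpoints: there is a finite list of knots s such that v is affine on
   every closed interval [a,b] of R_{>=0} containing no knot in its interior *)
Definition inV (v : R -> R) : Prop :=
  {within `[0%R, +oo[%classic, continuous v} /\
  exists s : seq R, forall a b, 0 <= a -> a < b ->
    (forall c, c \in s -> ~ (a < c /\ c < b)) ->
    exists al be : R, forall y, a <= y <= b -> v y = al + be * y.

Definition breakpoints (v : R -> R) : set R :=
  [set tau | 0 < tau /\ lderiv v tau <> rderiv v tau].

Definition inVS (S : set R) (v : R -> R) : Prop :=
  inV v /\ breakpoints v `<=` S.

Definition Vtau (tau : R) : R -> R := fun y => Num.max (y - tau) 0.

End Defs.

From HB Require Import structures.
From mathcomp Require Import all_boot all_order all_algebra.
From mathcomp Require Import all_classical all_reals all_analysis.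
From mathcomp Require Import lra ring measurable_realfun.
Import Order.TTheory GRing.Theory Num.Theory.
Import numFieldNormedType.Exports.
Local Open Scope classical_set_scope.
Local Open Scope ring_scope.

Set Implicit Arguments.
Unset Strict Implicit.
Unset Printing Implicit Defensive.

(* Move from theta = theta_(k-1) along the ray phi_t = theta + t V_tau, which
   stays in Theta and only adds the breakpoint tau, so L(theta_k) >= L(phi_t).
   From 1 + u <= e^u <= 1 + u + u^2/2 e^u (u >= 0),
     L(phi_t) >= L(theta) + t DL(theta, V_tau) - t^2/2 int V_tau^2 e^phi_t dM.
   Whenever L(phi_t) >= R, the hypotheses give phi_t(y) <= s_R + m_R y, and
   V_tau(y) <= y, so the last integral is at most gamma (even without its
   x_n^2 term) and L(phi_t) >= R + t eps - t^2 gamma / 2; at t = eps / gamma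
   this is R + eps^2 / (2 gamma). That L(phi_t) >= R persists up to eps / gamma is a
   continuity argument: away from t = 0 the quadratic bound keeps L(phi_t) a
   fixed amount above R, while the same expansion, with the exponent bounded
   by s_R + lam y for some lam in ]m_R, beta[, shows that L(phi_t) drops by
   at most O(s) over a step of length s. *)

Section piecewise_linear.
Variable R : realType.
Implicit Types (phi : R -> R) (s : seq R) (y d : R).

Lemma seq_isolated s y :
  exists2 d, 0 < d & forall c, c \in s -> c != y -> d <= `|c - y|.
Proof.
elim: s => [|c s [d d0 IH]]; first by exists 1.
case: (eqVneq c y) => [->|cy].
  by exists d => // c'; rewrite inE => /orP[/eqP->|]; [rewrite eqxx|exact: IH].
exists (Num.min d `|c - y|); first by rewrite lt_min d0 normr_gt0 subr_eq0 cy.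
move=> c'; rewrite inE => /orP[/eqP->|c's] cy'; first by rewrite ge_min lexx orbT.
by rewrite ge_min IH.
Qed.

Lemma inV_affine_right phi y : inV phi -> 0 <= y ->
  exists2 d, 0 < d & exists b, forall h, 0 <= h <= d -> phi (y + h) = phi y + b * h.
Proof.
move=> [_ [s hs]] y0; have [d d0 hd] := seq_isolated s y.
have nk c : c \in s -> ~ (y < c /\ c < y + d).
  move=> cs [yc cyd]; have := hd c cs (negbT (gt_eqF yc)).
  by rewrite ger0_norm ?subr_ge0 ?(ltW yc) //; lra.
have yd : y < y + d by rewrite ltrDl.
have [al [be hab]] := hs y (y + d) y0 yd nk.
exists d => //; exists be => h /andP[h0 hd'].
by rewrite !hab; [ring|apply/andP; split; lra..].
Qed.

Lemma inV_affine_left phi y : inV phi -> 0 < y ->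
  exists2 d, 0 < d & exists b, forall h, 0 <= h <= d -> phi (y - h) = phi y - b * h.
Proof.
move=> [_ [s hs]] y0; have [d0' d00 hd] := seq_isolated s y.
pose d := Num.min d0' y.
have d0 : 0 < d by rewrite lt_min d00 y0.
have dd0 : d <= d0' by rewrite ge_min lexx.
have dy : d <= y by rewrite ge_min lexx orbT.
have nk c : c \in s -> ~ (y - d < c /\ c < y).
  move=> cs [yc cy]; have := hd c cs (negbT (lt_eqF cy)).
  by rewrite ler0_norm ?subr_le0 ?(ltW cy) //; lra.
have y'0 : 0 <= y - d by rewrite subr_ge0.
have yd : y - d < y by lra.
have [al [be hab]] := hs (y - d) y y'0 yd nk.
exists d => //; exists be => h /andP[h0 hd'].
by rewrite !hab; [ring|apply/andP; split; lra..].
Qed.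

Lemma rderiv_locally_affine phi y d b : 0 < d ->
  (forall h, 0 <= h <= d -> phi (y + h) = phi y + b * h) -> rderiv phi y = b.
Proof.
move=> d0 hphi; apply: cvg_lim => //; apply: cvg_near_cst; near=> h.
have h0 : 0 < h by near: h; exact: nbhs_right_gt.
have hd : h < d by near: h; exact: nbhs_right_lt.
by rewrite hphi ?ltW ?hd ?andbT //; field; rewrite gt_eqF.
Unshelve. all: end_near. Qed.

Lemma lderiv_locally_affine phi y d b : 0 < d ->
  (forall h, 0 <= h <= d -> phi (y - h) = phi y - b * h) -> lderiv phi y = b.
Proof.
move=> d0 hphi; apply: cvg_lim => //; apply: cvg_near_cst; near=> h.
have h0 : h < 0 by near: h; exact: nbhs_left_lt.
have hd : - d < h by near: h; apply: nbhs_left_gt; rewrite oppr_lt0.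
rewrite -[h in y + h]opprK hphi; first by field; rewrite lt_eqF.
by rewrite oppr_ge0 ltW //= lerNl ltW.
Unshelve. all: end_near. Qed.

(* Convexity compares phi y with the chord from 0 to y + d, on which phi has slope rderiv phi y. *)
Lemma inTheta_le_line phi m : inTheta phi -> inV phi ->
  (forall y, 0 <= y -> rderiv phi y <= m) -> forall y, 0 <= y -> phi y <= phi 0 + m * y.
Proof.
move=> [cv _] hV hm y; rewrite le_eqVlt => /orP[/eqP<-|y0]; first by rewrite mulr0 addr0.
have [d d0 [b hb]] := inV_affine_right hV (ltW y0).
have bm : b <= m by rewrite -(rderiv_locally_affine d0 hb) hm ?ltW.
pose l := d / (y + d).
have yd0 : 0 < y + d by rewrite addr_gt0.
have l01 : 0 <= l <= 1.
  by rewrite /l divr_ge0 ?(ltW d0) ?(ltW yd0) //= ler_pdivrMr // mul1r lerDr ltW.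
have := cv 0 (y + d) l (lexx 0) (ltW yd0) l01.
have -> : l * 0 + (1 - l) * (y + d) = y by rewrite /l; field; rewrite gt_eqF.
rewrite hb; last by rewrite lexx ltW.
have -> : l * phi 0 + (1 - l) * (phi y + b * d) =
    (d * phi 0 + y * (phi y + b * d)) / (y + d) by rewrite /l; field; rewrite gt_eqF.
rewrite ler_pdivlMr // => h.
have : d * (phi y - phi 0) <= d * (m * y) by have := ler_wpM2l (ltW y0) bm; nra.
rewrite ler_pM2l //; lra.
Qed.

End piecewise_linear.

Section exp_bound.
Variable R : realType.

(* w is nondecreasing on [0, +oo[ since w' x = x (1 - e^-x) >= 0, and w 0 = 1. *)
Let w (x : R) : R := (1 + x) * expR (- x) + x ^+ 2 / 2.

Let w_derive (x : R) : is_derive x 1 w (x * (1 - expR (- x))).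
Proof.
rewrite /w; apply: is_derive_eq.
by rewrite ?scaler0 ?addr0 ?add0r -[x%:A]/(x * 1) /GRing.scale /=; field.
Qed.

Lemma expR_le_taylor2 (b : R) : 0 <= b -> expR b <= 1 + b + b ^+ 2 / 2 * expR b.
Proof.
move=> b0.
have w_cont : {within `[0, +oo[, continuous w}.
  apply: continuous_subspaceT => z; apply: differentiable_continuous.
  by apply/derivable1_diffP; case: (w_derive z).
have w0b : w 0 <= w b.
  apply: (ger0_derive1_ndecry _ _ w_cont) => // z.
  rewrite in_itv /= andbT derive1E => z0; have wz := w_derive z.
  by rewrite derive_val mulr_ge0 ?(ltW z0) // subr_ge0 expR_le1 oppr_le0 ltW.
move: w0b; rewrite /w oppr0 expR0 expr0n /= mul0r addr0 mulr1 addr0 => w1.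
rewrite -subr_ge0.
have -> : 1 + b + b ^+ 2 / 2 * expR b - expR b
    = expR b * ((1 + b) * expR (- b) + b ^+ 2 / 2 - 1).
  by rewrite expRN; field; rewrite gt_eqF ?expR_gt0.
by rewrite mulr_ge0 ?expR_ge0 ?subr_ge0.
Qed.
End exp_bound.

Section interval_induction.
Variable R : realType.

Lemma interval_step_ind (P : R -> Prop) (a b d : R) : a <= b -> 0 < d -> P a ->
  (forall t s, a <= t -> t + s <= b -> 0 <= s <= d -> P t -> P (t + s)) -> P b.
Proof.
move=> ab d0 Pa step; pose u k := Num.min (a + k%:R * d) b.
have ua k : a <= u k by rewrite le_min ab lerDl mulr_ge0 // ltW.
have ub k : u k <= b by rewrite ge_min lexx orbT.
have uS k : u k <= u k.+1 <= u k + d.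
  rewrite /u -addn1 natrD mulrDl mul1r addrA.
  move: (a + k%:R * d) => c; have d0' := ltW d0.
  by case: (leP c b) => cb; case: (leP (c + d) b) => cdb; apply/andP; split; lra.
have Pu k : P (u k).
  elim: k => [|k IH]; first by rewrite /u mul0r addr0 min_l.
  have /andP[uk1 uk2] := uS k; rewrite -(subrKC (u k) (u k.+1)).
  by apply: step; rewrite ?subrKC // subr_ge0 uk1 /=; lra.
have [k kd] : exists k : nat, (b - a) / d < k%:R.
  exists (Num.Def.archi_bound ((b - a) / d)); apply: archi_boundP.
  by rewrite divr_ge0 ?subr_ge0 // ltW.
suff <- : u k = b by [].
by rewrite /u min_r //; move: kd; rewrite ltr_pdivrMr //; lra.
Qed.

End interval_induction.

Section hinge.
Variable R : realType.
Implicit Types (th : R -> R) (tau t y : R).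

Lemma Vtau_ge0 tau y : 0 <= Vtau tau y.
Proof. by rewrite /Vtau le_max lexx orbT. Qed.

Lemma Vtau_le_id tau y : 0 <= tau -> 0 <= y -> Vtau tau y <= y.
Proof. by move=> tau0 y0; rewrite /Vtau ge_max y0 andbT; lra. Qed.

Lemma Vtau_ndecr tau : {homo Vtau tau : a b / a <= b}.
Proof. by move=> a b ab; rewrite /Vtau ge_max !le_max lexx orbT lerD2r ab. Qed.

Lemma Vtau_convex tau a b l : 0 <= l <= 1 ->
  Vtau tau (l * a + (1 - l) * b) <= l * Vtau tau a + (1 - l) * Vtau tau b.
Proof.
move=> /andP[l0 l1]; have l1' : 0 <= 1 - l by rewrite subr_ge0.
rewrite {1}/Vtau ge_max; apply/andP; split; last first.
  by rewrite addr_ge0 // mulr_ge0 ?Vtau_ge0.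
have -> : l * a + (1 - l) * b - tau = l * (a - tau) + (1 - l) * (b - tau) by ring.
by rewrite lerD // ler_wpM2l // le_max lexx.
Qed.

Lemma continuous_Vtau tau : continuous (Vtau tau).
Proof.
move=> y; apply: (@continuous_max _ _ (fun y => y - tau) (cst 0)); last exact: cvg_cst.
by apply: continuousB; [exact: cvg_id|exact: cvg_cst].
Qed.

Lemma Vtau_locally_affine tau y : y != tau -> exists c, forall h, 0 <= h <= `|y - tau| ->
  Vtau tau (y + h) = Vtau tau y + c * h /\ Vtau tau (y - h) = Vtau tau y - c * h.
Proof.
move=> yt; case: (ltP tau y) => ty.
  exists 1 => h /andP[h0]; rewrite gtr0_norm ?subr_gt0 // => hy.
  by rewrite /Vtau !max_l ?mul1r; [split; ring|lra..].
have {}ty : y < tau by rewrite lt_neqAle yt ty.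
exists 0 => h /andP[h0]; rewrite ltr0_norm ?subr_lt0 // => hy.
by rewrite /Vtau !max_r ?mul0r ?addr0 ?subr0; [|lra..].
Qed.

Definition ray th tau t : R -> R := fun y => th y + t * Vtau tau y.

Lemma ray0 th tau : ray th tau 0 = th.
Proof. by apply/funext => y; rewrite /ray mul0r addr0. Qed.

Lemma rayD th tau t s : ray (ray th tau t) tau s = ray th tau (t + s).
Proof. by apply/funext => y; rewrite /ray mulrDl addrA. Qed.

Lemma inTheta_ray th tau t : inTheta th -> 0 <= t -> inTheta (ray th tau t).
Proof.
move=> [cv mo] t0; split => [a b l a0 b0 l01|a b a0 ab].
  have := ler_wpM2l t0 (Vtau_convex tau a b l01); have := cv a b l a0 b0 l01.
  rewrite /ray; lra.
by rewrite /ray lerD ?mo // ler_wpM2l // Vtau_ndecr.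
Qed.

Lemma inV_ray th tau t : inV th -> inV (ray th tau t).
Proof.
move=> [cth [s hs]]; split.
  have cV : {within `[0%R, +oo[%classic, continuous (fun y => t * Vtau tau y)}.
    apply: continuous_subspaceT => z.
    by apply: continuousM; [exact: cvg_cst|exact: continuous_Vtau].
  by move=> z; exact: continuousD (cth z) (cV z).
exists (tau :: s) => a b a0 ab nk.
have [al [be hab]] : exists al be, forall y, a <= y <= b -> th y = al + be * y.
  by apply: hs => // c cs; apply: nk; rewrite inE cs orbT.
case: (leP tau a) => ta.
  exists (al - t * tau), (be + t) => z /andP[az zb].
  by rewrite /ray hab ?az ?zb // /Vtau max_l; [ring|lra].
have bt : b <= tau by rewrite leNgt; apply/negP => tb; apply: (nk tau (mem_head _ _)).
exists al, be => z /andP[az zb].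
by rewrite /ray hab ?az ?zb // /Vtau max_r; [ring|lra].
Qed.

(* Away from tau, both one-sided slopes of ray th tau t are those of th
   shifted by the same constant slope of Vtau. *)
Lemma breakpoints_ray th tau t : inV th ->
  breakpoints (ray th tau t) `<=` breakpoints th `|` [set tau].
Proof.
move=> hth y [y0 hne]; case: (eqVneq y tau) => [->|yt]; [by right|left; split=> //].
have [d1 d10 [br hr]] := inV_affine_right hth (ltW y0).
have [d2 d20 [bl hl]] := inV_affine_left hth y0.
have [c hc] := Vtau_locally_affine yt.
pose d := Num.min d1 (Num.min d2 `|y - tau|).
have d0 : 0 < d by rewrite !lt_min d10 d20 normr_gt0 subr_eq0 yt.
have [dd1 dd2 dd3] : [/\ d <= d1, d <= d2 & d <= `|y - tau|].
  by rewrite !ge_min !lexx !orbT.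
have Hr h : 0 <= h <= d -> th (y + h) = th y + br * h.
  by move=> /andP[h0 hd]; apply: hr; rewrite h0 (le_trans hd).
have Hl h : 0 <= h <= d -> th (y - h) = th y - bl * h.
  by move=> /andP[h0 hd]; apply: hl; rewrite h0 (le_trans hd).
have Pr h : 0 <= h <= d -> ray th tau t (y + h) = ray th tau t y + (br + t * c) * h.
  move=> /andP[h0 hd]; rewrite /ray Hr ?h0 ?hd //.
  by have [-> _] := hc h (introT andP (conj h0 (le_trans hd dd3))); ring.
have Pl h : 0 <= h <= d -> ray th tau t (y - h) = ray th tau t y - (bl + t * c) * h.
  move=> /andP[h0 hd]; rewrite /ray Hl ?h0 ?hd //.
  by have [_ ->] := hc h (introT andP (conj h0 (le_trans hd dd3))); ring.
move: hne; rewrite (lderiv_locally_affine d0 Pl) (rderiv_locally_affine d0 Pr).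
rewrite (lderiv_locally_affine d0 Hl) (rderiv_locally_affine d0 Hr).
by move=> hne e; apply: hne; rewrite e.
Qed.

Lemma Pint_ray n x th tau t :
  Pint n x (ray th tau t) = Pint n x th + t * Pint n x (Vtau tau).
Proof. by rewrite /Pint /ray big_split /= -mulr_sumr; ring. Qed.

Lemma Pint_Vtau_ge0 n x tau : 0 <= Pint n x (Vtau tau).
Proof. by rewrite /Pint mulr_ge0 ?invr_ge0 ?ler0n ?sumr_ge0 // => i _; exact: Vtau_ge0. Qed.

End hinge.

Section M_integral.
Variables (R : realType) (f : R -> R).
Hypothesis f_cont : {within `[0%R, +oo[%classic, continuous f}.
Hypothesis f_pos : forall y : R, 0 < y -> 0 < f y.
Local Notation D := (`[0%R, +oo[%classic : set R).
Implicit Types (g h phi : R -> R) (tau s : R).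

Let D_ge0 y : D y -> 0 <= y.
Proof. by rewrite /= in_itv /= andbT. Qed.

Let mD : measurable D.
Proof. exact: measurable_itv. Qed.

(* f (0) >= 0 is not assumed: it follows from continuity at 0. *)
Lemma density_ge0 y : 0 <= y -> 0 <= f y.
Proof.
rewrite le_eqVlt => /orP[/eqP<-|]; last by move/f_pos/ltW.
rewrite leNgt; apply/negP => f0; have [_ fc] := (continuous_within_itvcyP 0 f).1 f_cont.
near (0 : R)^'+ => t.
have t0 : 0 < t by near: t; exact: nbhs_right_gt.
have ft : f t < 0 by near: t; exact: cvgr_lt (f 0) fc 0 f0.
by have := f_pos t0; lra.
Unshelve. all: end_near. Qed.

Let measurable_integrand g : measurable_fun D g ->
  measurable_fun D (fun y => (g y * f y)%:E).
Proof.
move=> mg; apply/measurable_EFinP; apply: measurable_funM => //.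
exact: subspace_continuous_measurable_fun mD f_cont.
Qed.

Let integrand_ge0 g : (forall y, 0 <= y -> 0 <= g y) ->
  forall y, D y -> (0 <= (g y * f y)%:E)%E.
Proof. by move=> g0 y /D_ge0 y0; rewrite lee_fin mulr_ge0 ?g0 ?density_ge0. Qed.

Lemma Mint_ge0 g : (forall y, 0 <= y -> 0 <= g y) -> (0 <= Mint f g)%E.
Proof. by move=> g0; apply: integral_ge0; exact: integrand_ge0. Qed.

Lemma Mint_le g h : measurable_fun D g -> measurable_fun D h ->
  (forall y, 0 <= y -> 0 <= g y <= h y) -> (Mint f g <= Mint f h)%E.
Proof.
move=> mg mh gh; apply: ge0_le_integral => //.
- by apply: integrand_ge0 => y y0; have /andP[] := gh y y0.
- exact: measurable_integrand.
- exact: measurable_integrand.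
move=> y /D_ge0 y0; have /andP[_ ghy] := gh y y0.
by rewrite lee_fin ler_wpM2r ?density_ge0.
Qed.

Lemma MintD g h : measurable_fun D g -> measurable_fun D h ->
  (forall y, 0 <= y -> 0 <= g y) -> (forall y, 0 <= y -> 0 <= h y) ->
  Mint f (fun y => g y + h y) = (Mint f g + Mint f h)%E.
Proof.
move=> mg mh g0 h0; rewrite /Mint; under eq_integral do rewrite mulrDl EFinD.
by apply: ge0_integralD => //; (exact: integrand_ge0 || exact: measurable_integrand).
Qed.

Lemma MintZl k g : 0 <= k -> measurable_fun D g -> (forall y, 0 <= y -> 0 <= g y) ->
  Mint f (fun y => k * g y) = (k%:E * Mint f g)%E.
Proof.
move=> k0 mg g0; rewrite /Mint; under eq_integral do rewrite -mulrA EFinM.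
by apply: ge0_integralZl_EFin => //; (exact: integrand_ge0 || exact: measurable_integrand).
Qed.

Lemma measurable_inV phi : inV phi -> measurable_fun D phi.
Proof. by move=> [c _]; exact: subspace_continuous_measurable_fun mD c. Qed.

Lemma measurable_Vtau tau : measurable_fun D (Vtau tau).
Proof.
apply: subspace_continuous_measurable_fun mD _.
exact/continuous_subspaceT/continuous_Vtau.
Qed.

Lemma measurable_ray phi tau s : measurable_fun D phi -> measurable_fun D (ray phi tau s).
Proof.
by move=> mphi; apply: measurable_funD => //; apply: measurable_funM => //; exact: measurable_Vtau.
Qed.

Lemma measurable_expR_comp phi : measurable_fun D phi -> measurable_fun D (fun y => expR (phi y)).
Proof. by move=> mphi; apply: measurableT_comp => //; exact: measurable_expR. Qed.

Lemma Mint_poly_expR_lt_pinfty (c lam : R) :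
  (Mint f (fun y => expR (lam * y)) < +oo)%E ->
  (Mint f (fun y => (y ^+ 2 * expR (lam * y))%R) < +oo)%E ->
  (Mint f (fun y => ((1 + y ^+ 2) * expR (c + lam * y))%R) < +oo)%E.
Proof.
move=> h1 h2.
have me : measurable_fun D (fun y => expR (lam * y)).
  by apply: measurable_expR_comp; exact: measurable_funM.
have me2 : measurable_fun D (fun y => y ^+ 2 * expR (lam * y)).
  by apply: measurable_funM => //; exact: measurable_funX.
have e2_ge0 y : 0 <= y -> 0 <= y ^+ 2 * expR (lam * y).
  by move=> _; rewrite mulr_ge0 ?sqr_ge0 ?expR_ge0.
have -> : (fun y => (1 + y ^+ 2) * expR (c + lam * y)) =
    (fun y => expR c * (expR (lam * y) + y ^+ 2 * expR (lam * y))).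
  by apply/funext => y; rewrite expRD; ring.
rewrite (MintZl (expR_ge0 c) (measurable_funD me me2)); last first.
  by move=> y y0; rewrite addr_ge0 ?expR_ge0 ?e2_ge0.
by rewrite MintD // lte_mul_pinfty ?lee_fin ?expR_ge0 // lte_add_pinfty.
Qed.

Lemma Mint_sqr_expR_le (c a m : R) :
    0 < fine (Mint f (fun y => ((y ^+ 2 + c ^+ 2) * expR (a + m * y))%R)) ->
  (Mint f (fun y => (y ^+ 2 * expR (a + m * y))%R) <=
   (fine (Mint f (fun y => ((y ^+ 2 + c ^+ 2) * expR (a + m * y))%R)))%:E)%E.
Proof.
set G := Mint f _ => G_gt0.
have G_ge0 : (0 <= G)%E.
  by apply: Mint_ge0 => y _; rewrite mulr_ge0 ?expR_ge0 // addr_ge0 ?sqr_ge0.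
have GE : G = (fine G)%:E.
  by rewrite fineK // ge0_fin_numE // ltey; apply: contraTN G_gt0 => /eqP->; rewrite ltxx.
have me : measurable_fun D (fun y => expR (a + m * y)).
  by apply: measurable_expR_comp; apply: measurable_funD => //; exact: measurable_funM.
rewrite -GE; apply: Mint_le.
- by apply: measurable_funM => //; exact: measurable_funX.
- by apply: measurable_funM => //; apply: measurable_funD => //; exact: measurable_funX.
by move=> y y0; rewrite mulr_ge0 ?sqr_ge0 ?expR_ge0 //= ler_wpM2r ?expR_ge0 // lerDl sqr_ge0.
Qed.

Let E phi := Mint f (fun y => expR (phi y)).

Lemma Mint_expR_ge0 phi : (0 <= E phi)%E.
Proof. by apply: Mint_ge0 => y _; exact: expR_ge0. Qed.

Section ray_expansion.
Variables (phi : R -> R) (tau s : R).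
Hypotheses (mphi : measurable_fun D phi) (s0 : 0 <= s).
Local Notation V := (Vtau tau).
Let psi := ray phi tau s.

Let mVe : measurable_fun D (fun y => V y * expR (phi y)).
Proof. exact: measurable_funM (measurable_Vtau tau) (measurable_expR_comp mphi). Qed.

Let Ve_ge0 y : 0 <= y -> 0 <= V y * expR (phi y).
Proof. by move=> _; rewrite mulr_ge0 ?Vtau_ge0 ?expR_ge0. Qed.

Let mV2e : measurable_fun D (fun y => V y ^+ 2 * expR (psi y)).
Proof.
apply: measurable_funM; first exact: measurable_funX (measurable_Vtau tau).
exact: measurable_expR_comp (measurable_ray _ _ mphi).
Qed.

Let V2e_ge0 y : 0 <= y -> 0 <= V y ^+ 2 * expR (psi y).
Proof. by move=> _; rewrite mulr_ge0 ?sqr_ge0 ?expR_ge0. Qed.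

Let first_order y := expR (phi y) + s * (V y * expR (phi y)).

Let m_first_order : measurable_fun D first_order.
Proof.
by apply: measurable_funD; [exact: measurable_expR_comp|exact: measurable_funM].
Qed.

Let first_order_ge0 y : 0 <= y -> 0 <= first_order y.
Proof. by move=> y0; rewrite /first_order addr_ge0 ?expR_ge0 // mulr_ge0 ?Ve_ge0. Qed.

Let Mint_first_order :
  Mint f first_order = (E phi + s%:E * Mint f (fun y => (V y * expR (phi y))%R))%E.
Proof.
rewrite MintD ?MintZl //; first exact: measurable_expR_comp.
- exact: measurable_funM.
- by move=> y y0; rewrite mulr_ge0 ?Ve_ge0.
Qed.

Lemma Mint_expR_ray_ge :
  (E phi + s%:E * Mint f (fun y => (V y * expR (phi y))%R) <= E psi)%E.
Proof.
rewrite -Mint_first_order; apply: Mint_le => //.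
  exact: measurable_expR_comp (measurable_ray _ _ mphi).
move=> y y0; rewrite first_order_ge0 //= /first_order /psi /ray expRD.
by have := expR_ge1Dx (s * V y); have := expR_gt0 (phi y); nra.
Qed.

Lemma Mint_expR_ray_le : (E psi <= E phi + s%:E * Mint f (fun y => (V y * expR (phi y))%R)
   + (s ^+ 2 / 2)%:E * Mint f (fun y => (V y ^+ 2 * expR (psi y))%R))%E.
Proof.
have s2 : 0 <= s ^+ 2 / 2 by rewrite divr_ge0 ?sqr_ge0.
rewrite -Mint_first_order -MintZl // -MintD //; last by move=> y y0; rewrite mulr_ge0 ?V2e_ge0.
  apply: Mint_le.
  - exact: measurable_expR_comp (measurable_ray _ _ mphi).
  - by apply: measurable_funD => //; exact: measurable_funM.
  move=> y y0; rewrite expR_ge0 /= /first_order /psi /ray expRD.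
  have := expR_le_taylor2 (mulr_ge0 s0 (Vtau_ge0 tau y)).
  have := expR_ge0 (phi y); rewrite exprMn.
  set a := expR (phi y); set e := expR (s * V y) => a0 h.
  by have := ler_wpM2l a0 h; nra.
exact: measurable_funM.
Qed.

End ray_expansion.

End M_integral.

Section objective.
Variables (R : realType) (f : R -> R).
Hypothesis f_cont : {within `[0%R, +oo[%classic, continuous f}.
Hypothesis f_pos : forall y : R, 0 < y -> 0 < f y.
Variables (n : nat) (x : nat -> R).
Local Notation D := (`[0%R, +oo[%classic : set R).
Local Notation L := (Lobj f n x).
Implicit Types (phi : R -> R) (tau s m : R).

Lemma Lobj_le_EFin phi m : (m%:E <= Mint f (fun y => expR (phi y)))%E ->
  (L phi <= (Pint n x phi - m + 1)%:E)%E.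
Proof. by move=> hm; rewrite /Lobj EFinD EFinB leeD // leeB. Qed.

Lemma EFin_le_Lobj phi m : (Mint f (fun y => expR (phi y)) <= m%:E)%E ->
  ((Pint n x phi - m + 1)%:E <= L phi)%E.
Proof. by move=> hm; rewrite /Lobj EFinD EFinB leeD // leeB. Qed.

Lemma Lobj_EFin phi e : Mint f (fun y => expR (phi y)) = e%:E ->
  L phi = (Pint n x phi - e + 1)%:E.
Proof. by move=> he; rewrite /Lobj he. Qed.

Lemma Mint_expR_lt_pinfty phi r : (r%:E <= L phi)%E ->
  (Mint f (fun y => expR (phi y)) < +oo)%E.
Proof. by rewrite /Lobj ltey; apply: contraTN => /eqP ->. Qed.

Section along_ray.
Variables (phi : R -> R) (tau s e a : R).
Hypotheses (mphi : measurable_fun D phi) (s0 : 0 <= s).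
Hypothesis Ephi : Mint f (fun y => expR (phi y)) = e%:E.
Hypothesis Aphi : Mint f (fun y => Vtau tau y * expR (phi y)) = a%:E.

Lemma Lobj_ray_le :
  (L (ray phi tau s) <= (Pint n x phi - e + 1 + s * (Pint n x (Vtau tau) - a))%:E)%E.
Proof.
have := Mint_expR_ray_ge f_cont f_pos tau mphi s0.
rewrite Ephi Aphi -EFinM -EFinD => /Lobj_le_EFin /le_trans; apply.
by rewrite Pint_ray lee_fin; lra.
Qed.

Lemma Lobj_ray_ge B :
  (Mint f (fun y => (Vtau tau y ^+ 2 * expR (ray phi tau s y))%R) <= B%:E)%E ->
  ((Pint n x phi - e + 1 + s * (Pint n x (Vtau tau) - a) - s ^+ 2 / 2 * B)%:E
     <= L (ray phi tau s))%E.
Proof.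
move=> hB; have s2 : 0 <= s ^+ 2 / 2 by rewrite divr_ge0 ?sqr_ge0.
have := Mint_expR_ray_le f_cont f_pos tau mphi s0; rewrite Ephi Aphi => hE.
have {}hE : (Mint f (fun y => expR (ray phi tau s y)) <= (e + s * a + s ^+ 2 / 2 * B)%:E)%E.
  apply: le_trans hE _; rewrite -EFinM -EFinD (EFinD (e + s * a)) (EFinM (s ^+ 2 / 2)).
  by apply: leeD2l; apply: lee_wpmul2l; rewrite ?lee_fin.
apply: le_trans (EFin_le_Lobj hE); rewrite Pint_ray lee_fin; lra.
Qed.

End along_ray.

End objective.

Section one_step.
Variables (R : realType) (f : R -> R).
Hypothesis f_cont : {within `[0%R, +oo[%classic, continuous f}.
Hypothesis f_pos : forall y : R, 0 < y -> 0 < f y.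
Variables (n : nat) (x : nat -> R) (tau : R) (th : R -> R) (r sR mR lam : R).
Hypotheses (tau_ge0 : 0 <= tau) (th_Theta : inTheta th) (th_V : inV th).
Hypothesis Lth : Lobj f n x th = r%:E.
Hypothesis superlevel_le_line : forall phi, inTheta phi -> inV phi ->
  (r%:E <= Lobj f n x phi)%E -> forall y, 0 <= y -> phi y <= sR + mR * y.
Hypothesis mR_lt_lam : mR < lam.
Hypothesis Kint_fin :
  (Mint f (fun y => ((1 + y ^+ 2) * expR (sR + lam * y))%R) < +oo)%E.

Local Notation D := (`[0%R, +oo[%classic : set R).
Local Notation L := (Lobj f n x).
Local Notation V := (Vtau tau).
Local Notation phi := (ray th tau).

Let mth : measurable_fun D th := measurable_inV th_V.

Let mphi t : measurable_fun D (phi t) := measurable_ray tau t mth.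

Let Kint_ge0 : (0 <= Mint f (fun y => ((1 + y ^+ 2) * expR (sR + lam * y))%R))%E.
Proof.
by apply: (Mint_ge0 f_cont f_pos) => y _; rewrite mulr_ge0 ?expR_ge0 // addr_ge0 ?sqr_ge0.
Qed.

Let K := fine (Mint f (fun y => ((1 + y ^+ 2) * expR (sR + lam * y))%R)).

Let K_bound : (Mint f (fun y => ((1 + y ^+ 2) * expR (sR + lam * y))%R) <= K%:E)%E.
Proof. by rewrite fineK // ge0_fin_numE. Qed.

Let dominated_by_K (g : R -> R) : measurable_fun D g ->
    (forall y, 0 <= y -> 0 <= g y <= (1 + y ^+ 2) * expR (sR + lam * y)) ->
  (Mint f g <= K%:E)%E.
Proof.
move=> mg hg; apply: le_trans _ K_bound; apply: (Mint_le f_cont f_pos) => //.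
apply: measurable_funM; first by apply: measurable_funD => //; exact: measurable_funX.
by apply: measurable_expR_comp; apply: measurable_funD => //; exact: measurable_funM.
Qed.

Let K_ge0 : 0 <= K.
Proof. exact: fine_ge0 Kint_ge0. Qed.

Let ray_le_line t : 0 <= t -> (r%:E <= L (phi t))%E ->
  forall y, 0 <= y -> phi t y <= sR + mR * y.
Proof. by move=> t0; apply: superlevel_le_line; [exact: inTheta_ray|exact: inV_ray]. Qed.

Let ler_1Dsqr (y : R) : 0 <= y -> (y <= 1 + y ^+ 2) && (y ^+ 2 <= 1 + y ^+ 2).
Proof. by move=> y0; rewrite lerDr ler01 andbT; have := sqr_ge0 (y - 1 / 2); nra. Qed.

Let first_moments t : 0 <= t -> (r%:E <= L (phi t))%E -> exists e a,
  [/\ Mint f (fun y => expR (phi t y)) = e%:E,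
      Mint f (fun y => V y * expR (phi t y)) = a%:E & 0 <= a <= K].
Proof.
move=> t0 hL; have hphi := ray_le_line t0 hL.
have Ale : (Mint f (fun y => (V y * expR (phi t y))%R) <= K%:E)%E.
  apply: dominated_by_K.
    exact: measurable_funM (measurable_Vtau tau) (measurable_expR_comp (mphi t)).
  move=> y y0; rewrite mulr_ge0 ?Vtau_ge0 ?expR_ge0 //=.
  apply: ler_pM; rewrite ?Vtau_ge0 ?expR_ge0 //.
    by apply: le_trans (Vtau_le_id tau_ge0 y0) _; case/andP: (ler_1Dsqr y0).
  by rewrite ler_expR; apply: le_trans (hphi y y0) _; rewrite lerD2l ler_wpM2r // ltW.
have A0 : (0 <= Mint f (fun y => (V y * expR (phi t y))%R))%E.
  by apply: (Mint_ge0 f_cont f_pos) => y _; rewrite mulr_ge0 ?Vtau_ge0 ?expR_ge0.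
have Afin : Mint f (fun y => (V y * expR (phi t y))%R) \is a fin_num.
  by rewrite ge0_fin_numE // (le_lt_trans Ale) ?ltry.
have Efin : Mint f (fun y => expR (phi t y)) \is a fin_num.
  by rewrite ge0_fin_numE ?(Mint_expR_ge0 f_cont f_pos) // (Mint_expR_lt_pinfty hL).
exists (fine (Mint f (fun y => expR (phi t y)))).
exists (fine (Mint f (fun y => (V y * expR (phi t y))%R))).
split; rewrite ?fineK //; apply/andP; split; first exact: fine_ge0.
by rewrite -lee_fin fineK.
Qed.

Let second_moment t s : 0 <= t -> (r%:E <= L (phi t))%E -> 0 <= s <= lam - mR ->
  (Mint f (fun y => (V y ^+ 2 * expR (ray (phi t) tau s y))%R) <= K%:E)%E.
Proof.
move=> t0 hL /andP[s0 sl]; have hphi := ray_le_line t0 hL.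
apply: dominated_by_K.
  apply: measurable_funM; first exact: measurable_funX (measurable_Vtau tau).
  exact: measurable_expR_comp (measurable_ray _ _ (mphi t)).
move=> y y0; rewrite mulr_ge0 ?sqr_ge0 ?expR_ge0 //=.
have [Vy0 Vyy] := (Vtau_ge0 tau y, Vtau_le_id tau_ge0 y0).
apply: ler_pM; rewrite ?sqr_ge0 ?expR_ge0 //.
  apply: le_trans _ (proj2 (andP (ler_1Dsqr y0))).
  by rewrite ler_sqr ?nnegrE.
have := hphi y y0; have := ler_wpM2l s0 Vyy.
have : 0 <= (lam - mR - s) * y by rewrite mulr_ge0 // subr_ge0.
rewrite ler_expR -[ray (phi t) tau s y]/(phi t y + s * V y); lra.
Qed.

Lemma Lobj_ray_step t s l : 0 <= t -> r <= l -> (l%:E <= L (phi t))%E ->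
  0 <= s <= lam - mR -> ((l - s * K - s ^+ 2 / 2 * K)%:E <= L (phi (t + s)))%E.
Proof.
move=> t0 rl hl hs; have s0 : 0 <= s by case/andP: hs.
have hL : (r%:E <= L (phi t))%E by apply: le_trans hl; rewrite lee_fin.
have [e [a [he ha /andP[a0 aK]]]] := first_moments t0 hL.
rewrite -rayD; apply: le_trans (Lobj_ray_ge f_cont f_pos n x (mphi t) s0 he ha
  (second_moment t0 hL hs)).
move: hl; rewrite (Lobj_EFin _ _ he) !lee_fin => hl.
have := mulr_ge0 s0 (Pint_Vtau_ge0 n x tau); have := ler_wpM2l s0 aK; lra.
Qed.

Let a0 := fine (Mint f (fun y => (V y * expR (th y))%R)).
Let dL := Pint n x V - a0.

Let th_moments : exists e, [/\ Mint f (fun y => expR (th y)) = e%:E,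
  Mint f (fun y => V y * expR (th y)) = a0%:E & r = Pint n x th - e + 1].
Proof.
have hL0 : (r%:E <= L (phi 0))%E by rewrite ray0 Lth.
have [e [a [he ha _]]] := first_moments (lexx 0) hL0; rewrite ray0 in he ha.
exists e; split => //; first by rewrite /a0 ha.
by apply/EFin_inj; rewrite -Lth (Lobj_EFin _ _ he).
Qed.

Lemma Lobj_ray_near0 s : 0 <= s <= lam - mR ->
  ((r + s * dL - s ^+ 2 / 2 * K)%:E <= L (phi s) <= (r + s * dL)%:E)%E.
Proof.
move=> hs; have s0 : 0 <= s by case/andP: hs.
have [e [he ha re]] := th_moments.
have hL0 : (r%:E <= L (phi 0))%E by rewrite ray0 Lth.
have := second_moment (lexx 0) hL0 hs; rewrite ray0 => h2.
apply/andP; split.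
  by apply: le_trans (Lobj_ray_ge f_cont f_pos n x mth s0 he ha h2); rewrite lee_fin re /dL; lra.
by apply: le_trans (Lobj_ray_le f_cont f_pos n x mth s0 he ha) _; rewrite lee_fin re /dL; lra.
Qed.

Lemma DL_Vtau : DL f n x th V = dL%:E.
Proof.
have l0 : 0 < lam - mR by rewrite subr_gt0.
have Lfin s : 0 <= s <= lam - mR -> L (phi s) \is a fin_num.
  move=> /Lobj_ray_near0 /andP[lo up].
  by rewrite fin_numElt (lt_le_trans _ lo) ?ltNyr // (le_lt_trans up) ?ltry.
rewrite /DL Lth; apply: cvg_lim => //; apply: cvg_EFin.
  near=> s; have hs : 0 <= s <= lam - mR.
    apply/andP; split; [apply: ltW; near: s; exact: nbhs_right_gt|].
    by apply: ltW; near: s; exact: nbhs_right_lt.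
  by rewrite fin_numM ?fin_numB ?Lfin.
apply: (@squeeze_cvgr _ _ _ _ (fun s => dL - s * (K / 2)) (fun _ => dL)).
- near=> s; have s0 : 0 < s by near: s; exact: nbhs_right_gt.
  have hs : 0 <= s <= lam - mR.
    by rewrite ltW //=; apply: ltW; near: s; exact: nbhs_right_lt.
  rewrite -[X in _ <= X <= _]/(fine ((L (phi s) - r%:E) * (s^-1)%:E)%E).
  have /andP[] := Lobj_ray_near0 hs; rewrite -(fineK (Lfin s hs)) !lee_fin.
  rewrite -EFinB -EFinM /=; move: (fine _) => l lo up.
  rewrite ler_pdivlMr // ler_pdivrMr //.
  have -> : (dL - s * (K / 2)) * s = s * dL - s ^+ 2 / 2 * K by ring.
  by apply/andP; split; lra.
- have cl : (fun s : R => dL - s * (K / 2)) @ 0 --> dL - 0 * (K / 2).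
    by apply: cvgB; [exact: cvg_cst|apply: cvgM; [exact: cvg_id|exact: cvg_cst]].
  by move: (cvg_at_right_filter cl); rewrite mul0r subr0.
- exact: cvg_cst.
Unshelve. all: end_near. Qed.

Variable g : R.
Hypothesis g_bound : (Mint f (fun y => (y ^+ 2 * expR (sR + mR * y))%R) <= g%:E)%E.

Lemma Lobj_ray_quadratic t : 0 <= t -> (r%:E <= L (phi t))%E ->
  ((r + t * dL - t ^+ 2 / 2 * g)%:E <= L (phi t))%E.
Proof.
move=> t0 hL; have [e [he ha re]] := th_moments; have hphi := ray_le_line t0 hL.
have h2 : (Mint f (fun y => (V y ^+ 2 * expR (phi t y))%R) <= g%:E)%E.
  apply: le_trans g_bound; apply: (Mint_le f_cont f_pos).
  - apply: measurable_funM; first exact: measurable_funX (measurable_Vtau tau).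
    exact: measurable_expR_comp (mphi t).
  - apply: measurable_funM; first exact: measurable_funX.
    by apply: measurable_expR_comp; apply: measurable_funD => //; exact: measurable_funM.
  move=> y y0; rewrite mulr_ge0 ?sqr_ge0 ?expR_ge0 //=.
  apply: ler_pM; rewrite ?sqr_ge0 ?expR_ge0 ?ler_expR ?hphi //.
  by rewrite ler_sqr ?nnegrE ?Vtau_ge0 ?Vtau_le_id.
by apply: le_trans (Lobj_ray_ge f_cont f_pos n x mth t0 he ha h2); rewrite lee_fin re /dL; lra.
Qed.

Lemma Lobj_ray_start s : 0 <= s <= lam - mR -> s * K <= dL -> (r%:E <= L (phi s))%E.
Proof.
move=> hs sK; have s0 : 0 <= s by case/andP: hs.
have /andP[lo _] := Lobj_ray_near0 hs; apply: le_trans lo; rewrite lee_fin.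
have := ler_wpM2l s0 sK; have := mulr_ge0 s0 (mulr_ge0 s0 K_ge0).
have -> : s ^+ 2 / 2 * K = s * (s * K) / 2 by ring.
lra.
Qed.

Let g_ge0 : 0 <= g.
Proof.
rewrite -lee_fin; apply: le_trans g_bound; apply: (Mint_ge0 f_cont f_pos) => y _.
by rewrite mulr_ge0 ?sqr_ge0 ?expR_ge0.
Qed.

Lemma Lobj_ray_margin t0 t T : 0 <= t0 <= t -> t <= T -> T * g <= dL ->
  (r%:E <= L (phi t))%E -> ((r + t0 * dL / 2)%:E <= L (phi t))%E.
Proof.
move=> /andP[t00 t0t] tT Tg hL; have t_ge0 := le_trans t00 t0t.
apply: le_trans (Lobj_ray_quadratic t_ge0 hL); rewrite lee_fin.
have tg : t * g <= dL by apply: le_trans Tg; rewrite ler_wpM2r.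
have dL0 : 0 <= dL by apply: le_trans tg; rewrite mulr_ge0.
have := ler_wpM2l t_ge0 tg; have := ler_wpM2r dL0 t0t.
have -> : t ^+ 2 / 2 * g = t * (t * g) / 2 by ring.
lra.
Qed.

Lemma Lobj_ray_superlevel T : 0 < dL -> 0 < T -> T * g <= dL -> (r%:E <= L (phi T))%E.
Proof.
move=> dL0 T0 Tg; have K0 := K_ge0; have l0 : 0 < lam - mR by rewrite subr_gt0.
have K1 : 0 < K + 1 by lra.
pose t1 := Num.min T (Num.min (lam - mR) (dL / (K + 1))).
have t10 : 0 < t1 by rewrite !lt_min T0 l0 divr_gt0.
have [t1T t1l t1K] : [/\ t1 <= T, t1 <= lam - mR & t1 * (K + 1) <= dL].
  by rewrite -ler_pdivlMr // !ge_min !lexx !orbT.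
have [eta eta0 etaE] : exists2 eta, 0 < eta & t1 * dL / 2 = eta.
  by exists (t1 * dL / 2); rewrite ?divr_gt0 ?mulr_gt0.
pose sig := Num.min (lam - mR) (Num.min 1 (eta / (2 * K + 1))).
have sig0 : 0 < sig by rewrite !lt_min l0 ltr01 divr_gt0 //; lra.
have [sigl sig1 sigeta] : [/\ sig <= lam - mR, sig <= 1 & sig * (2 * K + 1) <= eta].
  by rewrite -ler_pdivlMr ?ge_min ?lexx ?orbT //; lra.
(* On [t1, T], L (phi t) stays eta above r, more than a step of length sig can lose. *)
apply: (@interval_step_ind _ (fun t => r%:E <= L (phi t))%E t1 T sig) => //.
  apply: Lobj_ray_start; first by rewrite (ltW t10).
  by apply: le_trans t1K; rewrite ler_wpM2l ?lerDl ?(ltW t10).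
move=> t s t1t tsT /andP[s0 ssig] hL.
have [t0 tT] : 0 <= t /\ t <= T by split; lra.
have hs : 0 <= s <= lam - mR by rewrite s0 (le_trans ssig).
have := Lobj_ray_margin (introT andP (conj (ltW t10) t1t)) tT Tg hL; rewrite etaE => hm.
apply: le_trans (Lobj_ray_step t0 _ hm hs); last by lra.
rewrite lee_fin.
have : s * (2 * K + 1) <= eta by apply: le_trans sigeta; rewrite ler_wpM2r //; lra.
have : s ^+ 2 / 2 * K <= s * K / 2.
  by rewrite -subr_ge0 (_ : _ - _ = s * (1 - s) * K / 2); [rewrite !mulr_ge0 //; lra|ring].
lra.
Qed.

Lemma Lobj_ray_gain eps : 0 < g -> 0 < eps -> (eps%:E <= DL f n x th V)%E ->
  ((r + eps ^+ 2 / (2 * g))%:E <= L (phi (eps / g)))%E.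
Proof.
move=> g0 eps0; rewrite DL_Vtau lee_fin => epsdL.
have T0 : 0 < eps / g by rewrite divr_gt0.
have Tg : eps / g * g = eps by rewrite divfK ?gt_eqF.
have TgdL : eps / g * g <= dL by rewrite Tg.
have hL := Lobj_ray_superlevel (lt_le_trans eps0 epsdL) T0 TgdL.
apply: le_trans (Lobj_ray_quadratic (ltW T0) hL); rewrite lee_fin.
have := ler_wpM2l (ltW T0) epsdL.
have -> : eps / g * eps = 2 * (eps ^+ 2 / (2 * g)) by field; rewrite gt_eqF.
have -> : (eps / g) ^+ 2 / 2 * g = eps ^+ 2 / (2 * g) by field; rewrite gt_eqF.
lra.
Qed.

End one_step.

Unset Implicit Arguments.
Set Strict Implicit.

Theorem mainTheorem2 (R : realType) (f : R -> R) (beta : R)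
  (* (A1) *)
  (f_cont : {within `[0%R, +oo[%classic, continuous f})
  (f_pos : forall y : R, 0 < y -> 0 < f y)
  (* f is a probability density on R_{>=0} *)
  (f_prob : Mint f (fun _ => 1) = 1%E)
  (* (A2) *)
  (A2a : forall lam : R, (Mint f (fun y => expR (lam * y)%R) < +oo)%E <-> lam < beta)
  (A2b : (fun lam : R => Mint f (fun y => expR (lam * y))) @ beta^'- --> +oo%E)
  (* (A3) *)
  (A3 : forall lam : R, (Mint f (fun y => expR (lam * y)%R) < +oo)%E ->
          (Mint f (fun y => (y ^+ 2 * expR (lam * y))%R) < +oo)%E)
  (* data x_1 <= ... <= x_n in R_{>=0}, stored as x 0, ..., x (n-1) *)
  (n : nat) (x : nat -> R) (n_gt0 : (0 < n)%N)
  (x_ge0 : forall i, (i < n)%N -> 0 <= x i)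
  (x_sorted : forall i j, (i <= j)%N -> (j < n)%N -> x i <= x j)
  (eps : R) (eps_gt0 : 0 < eps)
  (* one step of the algorithm with exact searches *)
  (th_prev : R -> R) (th_prev_Theta : inTheta th_prev) (th_prev_V : inV th_prev)
  (tau : R) (tau_ge0 : 0 <= tau)
  (tau_max : forall t : R, 0 <= t ->
     (DL f n x th_prev (Vtau t) <= DL f n x th_prev (Vtau tau))%E)
  (th_next : R -> R) (th_next_Theta : inTheta th_next)
  (th_next_V : inVS (breakpoints th_prev `|` [set tau]) th_next)
  (th_next_max : forall th : R -> R, inTheta th ->
     inVS (breakpoints th_prev `|` [set tau]) th ->
     (Lobj f n x th <= Lobj f n x th_next)%E)
  (* R := L(theta_{k-1}) finite *)
  (r : R) (hr : Lobj f n x th_prev = r%:E)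
  (sR mR : R) (sR_ge0 : 0 <= sR) (mR_lt : mR < beta)
  (hsm : forall phi : R -> R, inTheta phi -> (r%:E <= Lobj f n x phi)%E ->
     `|phi 0| <= sR /\ (forall y : R, 0 <= y -> rderiv phi y <= mR))
  (hsup : (eps%:E <= ereal_sup [set DL f n x th_prev (Vtau t) | t in [set t : R | (0 <= t)%R]])%E) :
  let gamma := Mint f (fun y => ((y ^+ 2 + x n.-1 ^+ 2) * expR (sR + mR * y))%R) in
  ((eps ^+ 2 / (2 * fine gamma))%R%:E <= Lobj f n x th_next - Lobj f n x th_prev)%E.
Proof.
cbv zeta; set gamma := Mint f (fun y => ((y ^+ 2 + x n.-1 ^+ 2) * _)%R).
have le_line phi : inTheta phi -> inV phi -> (r%:E <= Lobj f n x phi)%E ->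
    forall y, 0 <= y -> phi y <= sR + mR * y.
  move=> hT hV hL y y0; have [h0 hd] := hsm phi hT hL.
  by have := inTheta_le_line hT hV hd y0; have := ler_norm (phi 0); lra.
have next_ge t : 0 <= t -> (Lobj f n x (ray th_prev tau t) <= Lobj f n x th_next)%E.
  move=> t0; apply: th_next_max; first exact: inTheta_ray.
  by split; [exact: inV_ray|exact: breakpoints_ray].
(* fine gamma <= 0 only when gamma = +oo; then fine gives 0 and the claimed
   gain is eps^2 / 0 = 0. *)
have [g_le0|g_gt0] := leP (fine gamma) 0.
  apply: (@le_trans _ _ 0%E).
    by rewrite lee_fin mulr_ge0_le0 ?sqr_ge0 // invr_le0 mulr_ge0_le0.
  by rewrite hr sube_ge0 // -hr -{1}(ray0 th_prev tau) next_ge.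
pose lam := (mR + beta) / 2.
have [mR_lam lam_beta] : mR < lam /\ lam < beta by rewrite /lam; split; lra.
have Mlam := (A2a lam).2 lam_beta.
have eps_DL : (eps%:E <= DL f n x th_prev (Vtau tau))%E.
  by apply: le_trans hsup _; apply: ge_ereal_sup => _ [t t0 <-]; exact: tau_max.
have := Lobj_ray_gain f_cont f_pos tau_ge0 th_prev_Theta th_prev_V hr le_line mR_lam
  (Mint_poly_expR_lt_pinfty f_cont f_pos sR Mlam (A3 lam Mlam))
  (Mint_sqr_expR_le f_cont f_pos g_gt0) g_gt0 eps_gt0 eps_DL.
move=> /le_trans /(_ (next_ge _ (ltW (divr_gt0 eps_gt0 g_gt0)))).
by rewrite hr leeBrDr // -EFinD addrC.
Qed.
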